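(* Let $G$ be a crown-free linear $3$-graph on $n$ vertices, and let $s$ be the number of vertices of $G$ of degree at least $6$. If $s \leq 2$, then the number of edges of $G$ satisfies $$|E(G)| \leq \frac{10(n-s)}{7}.$$
   Context: A linear $3$-graph $G=(V,E)$ consists of a finite vertex set $V$ and a collection $E$ of $3$-element subsets of $V$ (edges) such that any two distinct edges share at most one vertex. The degree $d(v)$ of a vertex $v$ is the number of edges containing $v$. The crown $C_{13}$ is the linear $3$-graph on $9$ vertices $\{a,b,c,d,e,f,g,h,i\}$ with edges $\{a,b,c\},\{a,d,e\},\{b,f,g\},\{c,h,i\}$. A linear $3$-graph is crown-free if it contains no copy of $C_{13}$, i.e. no four of its edges together with an injective assignment of the nine vertices form the crown. *)

From mathcomp Require Import all_boot.
Set Implicit Arguments. Unset Strict Implicit. Unset Printing Implicit Defensive.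

Definition linear_3graph (V : finType) (E : {set {set V}}) : Prop :=
  (forall e, e \in E -> #|e| = 3) /\
  (forall e f, e \in E -> f \in E -> e != f -> #|e :&: f| <= 1).

Definition deg (V : finType) (E : {set {set V}}) (v : V) : nat :=
  #|[set e in E | v \in e]|.

Definition has_crown (V : finType) (E : {set {set V}}) : Prop :=
  exists a b c d e f g h i : V,
    uniq [:: a; b; c; d; e; f; g; h; i] /\
    [set a; b; c] \in E /\ [set a; d; e] \in E /\
    [set b; f; g] \in E /\ [set c; h; i] \in E.

Definition crown_free (V : finType) (E : {set {set V}}) : Prop :=
  ~ has_crown E.

From mathcomp Require Import all_boot zify.
Set Implicit Arguments. Unset Strict Implicit. Unset Printing Implicit Defensive.

(* Discharging.  Every vertex of degree at most 5 sends charge to its edges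
   according to [charge_of], in total at most 120, while every edge receives at
   least 84 = 120 * 7/10; hence 84 |E| <= 120 (n - s).

   Both bounds rest on three configurations that crown-freeness rules out, each
   by choosing pairwise disjoint edges through the three vertices of an edge,
   greedily by degree: an edge with degrees (>= 6, >= 2, >= 4); an edge with
   degrees (3, 5, 5) whose vertex of degree 3 lies on an edge with a vertex of
   degree >= 6; and a vertex [v] of degree 5 on two edges [e1 = {v, p, q}] and
   [e2 = {v, p', q'}] with [p, q, p', q'] of degree at least 4.

   In the last case each edge through [p] or [q] other than [e1] meets exactly
   two of the four other edges through [v], and these pairs are a fixed pair [B]
   or its complement, according as the edge misses or meets [e2].  Arguing from
   [e2] gives the same pair [B].  The edges through [q], [p'], [q'] that miss the
   opposite central edge then all meet a fixed edge through [p] and both edges of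
   [B], which is possible for at most two of them. *)

Section FinsetFacts.
Variable T : finType.
Implicit Types (A B X : {set T}) (F : {set {set T}}).

Lemma setI0_neq A B x y : A :&: B = set0 -> x \in A -> y \in B -> x != y.
Proof. by move=> /setP/(_ x) + xA yB; rewrite !inE xA /=; apply: contraFneq => ->. Qed.

Lemma setI0_from A B : (forall x, x \in A -> x \in B -> False) -> A :&: B = set0.
Proof. by move=> AB; apply/setP => x; rewrite !inE; apply/negP => /andP[/AB]. Qed.

Lemma setI0_notin A B x : A :&: B = set0 -> x \in B -> x \notin A.
Proof. by move=> AB xB; apply/negP => xA; have := setI0_neq AB xA xB; rewrite eqxx. Qed.

Lemma cards3 (x y z : T) : x != y -> x != z -> y != z -> #|[set x; y; z]| = 3.
Proof. by move=> xy xz yz; rewrite -setUA cardsU1 cards2 !inE negb_or xy xz yz. Qed.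

Lemma mem_notin_neq A x y : x \in A -> y \notin A -> x != y.
Proof. by move=> xA; apply: contraNneq => <-. Qed.

Lemma card_sepID A (P : pred T) :
  #|A| = #|[set x in A | P x]| + #|[set x in A | ~~ P x]|.
Proof.
rewrite -(cardsID [set x | P x] A); congr (_ + _); apply: eq_card => x; rewrite !inE //.
by rewrite andbC.
Qed.

Lemma leq_card_transversal F X :
  (forall g, g \in F -> g :&: X != set0) ->
  (forall g g', g \in F -> g' \in F -> g != g' -> g :&: g' :&: X = set0) ->
  #|F| <= #|X|.
Proof.
move=> meetX disjX; have [X0 | [x0 _]] := set_0Vmem X.
  suff -> : F = set0 by rewrite cards0.
  by apply/setP => g; rewrite inE; apply/negP => /meetX; rewrite X0 setI0 eqxx.
pose pt g := odflt x0 [pick x in g :&: X].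
have ptP g : g \in F -> pt g \in g :&: X.
  move=> gF; rewrite /pt; case: pickP => [x -> //| none] /=.
  by case/set0Pn: (meetX _ gF) => x; rewrite none.
have pt_inj : {in F &, injective pt}.
  move=> g g' gF g'F eq_pt; apply/eqP; apply: contraT => /(disjX _ _ gF g'F) /setP/(_ (pt g)).
  by move: (ptP _ gF) (ptP _ g'F); rewrite -eq_pt !inE => /andP[-> ->] /andP[-> _].
rewrite -(card_in_imset pt_inj); apply: subset_leq_card.
by apply/subsetP => x /imsetP [g gF ->]; case/setIP: (ptP _ gF).
Qed.

Lemma sum_set3 (F : T -> nat) x y z : x != y -> x != z -> y != z ->
  \sum_(t in [set x; y; z]) F t = F x + F y + F z.
Proof.
move=> xy xz yz; rewrite -setUA big_setU1 /= ?big_setU1 ?big_set1 ?addnA //.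
  by rewrite inE.
by rewrite !inE negb_or xy xz.
Qed.

End FinsetFacts.

Lemma sum_nat_if (I : finType) (A : {set I}) (P : pred I) a b :
  \sum_(i in A) (if P i then a else b) =
  a * #|[set i in A | P i]| + b * #|[set i in A | ~~ P i]|.
Proof.
rewrite (bigID P) /=; congr (_ + _); rewrite mulnC -sum_nat_const.
  by apply: eq_big => [i | i /andP[_ ->]]; rewrite ?inE.
by apply: eq_big => [i | i /andP[_ /negbTE ->]]; rewrite ?inE.
Qed.

Section LinearGraph.
Variables (V : finType) (E : {set {set V}}).
Hypothesis E_linear : linear_3graph E.
Implicit Types (e f g : {set V}) (S : {set V}) (B : {set {set V}}).

Local Notation d := (deg E).

Definition star (u : V) := [set f in E | u \in f].

Lemma degE u : d u = #|star u|. Proof. by []. Qed.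

Lemma in_starD1 u e f : (f \in star u :\ e) = [&& f != e, f \in E & u \in f].
Proof. by rewrite !inE. Qed.

Lemma card_edge f : f \in E -> #|f| = 3.
Proof. by case: E_linear => card3 _; apply: card3. Qed.

Lemma edge_eq f g u w : f \in E -> g \in E -> u != w ->
  u \in f -> w \in f -> u \in g -> w \in g -> f = g.
Proof.
move=> fE gE uw uf wf ug wg; apply/eqP; apply: contraT => fg.
case: E_linear => _ /(_ f g fE gE fg); apply: contraTT => _; rewrite -ltnNge.
have : [set u; w] \subset f :&: g by apply/subsetP => z; rewrite !inE => /orP[]/eqP->; apply/andP.
by move/subset_leq_card; rewrite cards2 uw.
Qed.

Lemma edge_common_uniq f g u w : f \in E -> g \in E -> f != g ->
  u \in f -> w \in f -> u \in g -> w \in g -> u = w.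
Proof.
move=> fE gE fg uf wf ug wg; apply/eqP; apply: contraNT fg => uw.
by apply/eqP; apply: (edge_eq fE gE uw).
Qed.

Lemma cross_edge_eq g x x' y o o' c c' : g \in E -> x \in E -> x' \in E -> y \in E ->
  o \notin g -> o' \notin g -> o \in x -> o \in x' -> o' \in y ->
  c \in x :&: y :&: g -> c' \in x' :&: y :&: g -> x = x'.
Proof.
move=> gE xE x'E yE og o'g ox ox' o'y.
rewrite !inE => /andP[/andP[cx cy] cg] /andP[/andP[c'x' c'y] c'g].
have yg : y != g by apply: contraNneq o'g => <-.
have cc' := edge_common_uniq yE gE yg cy c'y cg c'g; subst c'.
have oc : o != c by apply: contraNneq og => ->.
exact: edge_eq xE x'E oc ox cx ox' c'x'.
Qed.

Lemma notin_other_edge e f u w : e \in E -> f \in E -> f != e ->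
  u \in e -> w \in e -> u != w -> u \in f -> w \notin f.
Proof. by move=> eE fE fe ue we uw uf; apply: contra fe => wf; apply/eqP/(edge_eq fE eE uw). Qed.

Lemma edge_set3 f u w z : f \in E -> u \in f -> w \in f -> z \in f ->
  u != w -> u != z -> w != z -> f = [set u; w; z].
Proof.
move=> fE uf wf zf uw uz wz.
apply/eqP; rewrite eq_sym eqEcard (card_edge fE) cards3 // leqnn andbT.
by apply/subsetP => t; rewrite !inE => /orP[/orP[]|]/eqP->.
Qed.

Lemma card_edgeD1 f u : f \in E -> u \in f -> #|f :\ u| = 2.
Proof. by move=> fE uf; move: (card_edge fE); rewrite (cardsD1 u) uf => -[]. Qed.

Lemma edge_third f u w : f \in E -> u \in f -> w \in f -> u != w ->
  exists z, [/\ f = [set u; w; z], z != u & z != w].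
Proof.
move=> fE uf wf uw; have : #|f :\ u :\ w| == 1.
  by move: (card_edgeD1 fE uf); rewrite (cardsD1 w) !inE (eq_sym w) uw wf add1n => -[->].
case/cards1P => z fz; have : z \in f :\ u :\ w by rewrite fz set11.
rewrite !inE => /and3P[zw zu zf]; exists z; split => //.
by apply: edge_set3; rewrite // eq_sym.
Qed.

Lemma edge_split f u : f \in E -> u \in f ->
  exists a b, [/\ f = [set u; a; b], u != a, u != b & a != b].
Proof.
move=> fE uf; have : #|f :\ u| == 2 by rewrite card_edgeD1.
case/cards2P => a [b [ab fab]].
have : (a \in f :\ u) && (b \in f :\ u) by rewrite fab !inE !eqxx orbT.
rewrite !inE => /andP[/andP[au af] /andP[bu bf]].
have [ua ub] : u != a /\ u != b by rewrite !(eq_sym u).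
by exists a, b; rewrite (edge_set3 fE uf af bf).
Qed.

Lemma card_edgeD f e u : f \in E -> u \in f -> u \in e -> #|f :\: e| <= 2.
Proof.
move=> fE uf ue; rewrite -(card_edgeD1 fE uf); apply: subset_leq_card.
by apply/subsetP => t; rewrite !inE => /andP[te ->]; rewrite andbT; apply: contraNneq te => ->.
Qed.

Lemma card_star_meet u S : u \notin S -> #|[set f in star u | f :&: S != set0]| <= #|S|.
Proof.
move=> uS; apply: leq_card_transversal => [f|f f']; first by rewrite inE => /andP[].
rewrite !inE => /andP[/andP[fE uf] _] /andP[/andP[f'E uf'] _] ff'.
apply: setI0_from => w; rewrite !inE => /andP[wf wf'] wS.
have uw : u != w by apply: contraNneq uS => ->.
by move/eqP: ff'; apply; apply: (edge_eq fE f'E uw).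
Qed.

Lemma exists_edge_avoiding u S (K : {set {set V}}) : u \notin S -> #|S| + #|K| < d u ->
  exists f, [/\ f \in E, u \in f, f :&: S = set0 & f \notin K].
Proof.
move=> uS du.
have : #|K| < #|[set f in star u | ~~ (f :&: S != set0)]|.
  have := card_sepID (star u) (fun f => f :&: S != set0).
  by move: (card_star_meet uS) du; rewrite degE /=; lia.
rewrite ltnNge => /(contra (@subset_leq_card _ _ K)).
case/subsetPn => f; rewrite !inE negbK => /andP[/andP[fE uf] /eqP fS] fK.
by exists f.
Qed.

(* Only the part of [S] outside [e] counts: no edge through [u] other than [e]
   meets [e] twice. *)
Lemma exists_leg e u S : e \in E -> u \in e -> u \notin S -> #|S :\: e| + 1 < d u ->
  exists f, [/\ f \in E, u \in f, f != e & f :&: S = set0].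
Proof.
move=> eE ue uS du; have uSe : u \notin S :\: e by rewrite inE negb_and uS orbT.
have : #|S :\: e| + #|[set e]| < d u by rewrite cards1.
case/(exists_edge_avoiding uSe) => f [fE uf fS]; rewrite inE => fe; exists f; split=> //.
apply: setI0_from => w wf wS; have [we | we] := boolP (w \in e).
  have uw : u != w by apply: contraNneq uS => ->.
  by move: wf; apply/negP; apply: (notin_other_edge eE fE fe ue we).
have wSe : w \in S :\: e by rewrite inE we wS.
by have := setI0_neq fS wf wSe; rewrite eqxx.
Qed.

Lemma setI0U f S S' : f :&: (S :|: S') = set0 -> f :&: S = set0 /\ f :&: S' = set0.
Proof. by rewrite setIUr => /eqP; rewrite setU_eq0 => /andP[/eqP-> /eqP->]. Qed.

Hypothesis E_crown_free : crown_free E.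

Lemma crown_legsF e fx fy fz x y z : e \in E -> x \in e -> y \in e -> z \in e ->
  fx \in E -> fy \in E -> fz \in E -> x \in fx -> y \in fy -> z \in fz ->
  fx :&: fy = set0 -> fx :&: fz = set0 -> fy :&: fz = set0 -> False.
Proof.
move=> eE xe ye ze fxE fyE fzE xfx yfy zfz Dxy Dxz Dyz.
have [xy xz yz] := And3 (setI0_neq Dxy xfx yfy) (setI0_neq Dxz xfx zfz) (setI0_neq Dyz yfy zfz).
have [a1 [a2 [Ex _ _ _]]] := edge_split fxE xfx.
have [b1 [b2 [Ey _ _ _]]] := edge_split fyE yfy.
have [c1 [c2 [Ez _ _ _]]] := edge_split fzE zfz.
apply: E_crown_free; exists x, y, z, a1, a2, b1, b2, c1, c2.
rewrite -(edge_set3 eE xe ye ze xy xz yz) -Ex -Ey -Ez; split => //.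
have card9 : #|fx :|: fy :|: fz| = 9.
  rewrite cardsU setIUl Dxz Dyz setU0 cards0 subn0 cardsU Dxy cards0 subn0.
  by rewrite !card_edge.
apply/card_uniqP/eqP; rewrite eqn_leq card_size /= -card9.
apply/subset_leq_card/subsetP => t; rewrite Ex Ey Ez !inE.
by case/orP => [/orP[]|] /orP[/orP[]|] /eqP->; rewrite !eqxx ?orbT.
Qed.

Lemma no_edge_6_2_4 e h u w : e \in E -> h \in e -> u \in e -> w \in e ->
  h != u -> h != w -> u != w -> 6 <= d h -> 2 <= d u -> 4 <= d w -> False.
Proof.
move=> eE he ue we hu hw uw dh du dw.
have [fu [fuE ufu fue _]] : exists f, [/\ f \in E, u \in f, f != e & f :&: set0 = set0].
  by apply: exists_leg; rewrite ?inE ?set0D ?cards0.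
have wfu : w \notin fu := notin_other_edge eE fuE fue ue we uw ufu.
have hfu : h \notin fu by apply: (notin_other_edge eE fuE fue ue he); rewrite // eq_sym.
have [fw [fwE wfw fwe fwu]] : exists f, [/\ f \in E, w \in f, f != e & f :&: fu = set0].
  by apply: exists_leg => //; apply: leq_trans dw; rewrite addn1 !ltnS (card_edgeD fuE ufu ue).
have hfw : h \notin fw by apply: (notin_other_edge eE fwE fwe we he); rewrite // eq_sym.
have [fh [fhE hfh _ /setI0U[fhu fhw]]] :
    exists f, [/\ f \in E, h \in f, f != e & f :&: (fu :|: fw) = set0].
  apply: exists_leg; rewrite ?inE ?negb_or ?hfu ?hfw // setDUl.
  apply: leq_trans dh; rewrite addn1 !ltnS (leq_trans (leq_card_setU _ _).1) //.
  exact: leq_add (card_edgeD fuE ufu ue) (card_edgeD fwE wfw we).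
by apply: (crown_legsF eE he ue we fhE fuE fwE hfh ufu wfw fhu fhw); rewrite setIC.
Qed.

Lemma deg_le1_edge_eq c z g : d c <= 1 -> z \in E -> c \in z -> g \in E -> c \in g -> g = z.
Proof.
move=> dc zE cz gE cg; apply/eqP; apply: contraT => gz.
have : [set g; z] \subset star c by apply/subsetP => t; rewrite !inE => /orP[]/eqP->; apply/andP.
by move/subset_leq_card; rewrite cards2 gz -degE leqNgt (leq_ltn_trans dc).
Qed.

Section NearBig.
Variables (e f : {set V}) (a p q h : V).
Hypotheses (eE : e \in E) (ae : a \in e) (pe : p \in e) (qe : q \in e) (pq : p != q)
  (da : d a = 3) (dp : d p = 5) (dq : d q = 5)
  (fE : f \in E) (af : a \in f) (hf : h \in f) (dh : 6 <= d h).

Let neq_deg u w : d u != d w -> u != w. Proof. by apply: contraNneq => ->. Qed.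
Let ap : a != p. Proof. by apply: neq_deg; rewrite da dp. Qed.
Let aq : a != q. Proof. by apply: neq_deg; rewrite da dq. Qed.
Let ha : h != a. Proof. by apply: neq_deg; rewrite da; apply: contraTneq dh => ->. Qed.
Let hp : h != p. Proof. by apply: neq_deg; rewrite dp; apply: contraTneq dh => ->. Qed.
Let hq : h != q. Proof. by apply: neq_deg; rewrite dq; apply: contraTneq dh => ->. Qed.
Let Ee : e = [set a; p; q]. Proof. exact: edge_set3. Qed.
Let he : h \notin e. Proof. by rewrite Ee !inE !negb_or ha hp hq. Qed.
Let fe : f != e. Proof. by apply: contraNneq he => <-. Qed.
Let pf : p \notin f. Proof. exact: notin_other_edge eE fE fe ae pe ap af. Qed.
Let qf : q \notin f. Proof. exact: notin_other_edge eE fE fe ae qe aq af. Qed.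

Lemma near_big_no_common_edge : ~~ [exists z in E, (q \in z) && (h \in z)] -> False.
Proof.
move=> no_qh.
have [y [yE py ye yf]] : exists y, [/\ y \in E, p \in y, y != e & y :&: f = set0].
  by apply: exists_leg => //; rewrite dp addn1 !ltnS (leq_trans (card_edgeD fE af ae)).
have qy : q \notin y := notin_other_edge eE yE ye pe qe pq py.
have [z [zE qz ze /setI0U[zfh zy]]] :
    exists z, [/\ z \in E, q \in z, z != e & z :&: ((f :\ h) :|: y) = set0].
  apply: exists_leg; rewrite ?inE ?negb_or ?negb_and ?qf ?qy ?orbT // setDUl dq.
  have : #|(f :\ h) :\: e| <= 1.
    have : (f :\ h) :\: e \subset f :\ a :\ h.
      apply/subsetP => t; rewrite !inE => /andP[te /andP[-> ->]].
      by rewrite andbT; apply: contraNneq te => ->.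
    move/subset_leq_card/leq_trans; apply; move: (card_edgeD1 fE af).
    by rewrite (cardsD1 h) !inE ha hf add1n => -[->].
  move=> card_fh; rewrite addn1 !ltnS (leq_trans (leq_card_setU _ _).1) //.
  exact: leq_add card_fh (card_edgeD yE py pe).
have zf : z :&: f = set0.
  apply: setI0_from => t tz tf; have [th | th] := eqVneq t h.
    by move/negP: no_qh; apply; apply/exists_inP; exists z; rewrite // qz -th.
  have tfh : t \in f :\ h by rewrite !inE th tf.
  by have := setI0_neq zfh tz tfh; rewrite eqxx.
by apply: (crown_legsF eE ae pe qe fE yE zE af py qz); rewrite setIC.
Qed.

Lemma near_big_common_edge z : z \in E -> q \in z -> h \in z -> False.
Proof.
move=> zE qz hz; have qh : q != h by rewrite eq_sym.
have [c [Ez cq ch]] := edge_third zE qz hz qh.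
have cz : c \in z by rewrite Ez !inE eqxx orbT.
have dc : d c <= 1.
  rewrite leqNgt; apply/negP => dc.
  by apply: (no_edge_6_2_4 zE hz cz qz); rewrite // 1?eq_sym // dq.
have ze : z != e by apply: contraNneq he => <-.
have notin_z o : o \in e -> o != q -> o \in z -> False.
  by move=> oe oq oz; move/eqP: ze; apply; apply: (edge_eq zE eE oq).
have [g [gE ag _]] : exists g, [/\ g \in E, a \in g, g :&: set0 = set0 & g \notin [set e; f]].
  by apply: exists_edge_avoiding; rewrite ?inE // cards0 cards2 da; case: (e != f).
rewrite !inE negb_or => /andP[ge gf].
have qg : q \notin g := notin_other_edge eE gE ge ae qe aq ag.
have hg : h \notin g by apply: (notin_other_edge fE gE gf af hf); rewrite // eq_sym.
have [x [xE px xe /setI0U[xg xh]]] :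
    exists x, [/\ x \in E, p \in x, x != e & x :&: (g :|: [set h]) = set0].
  apply: exists_leg; rewrite ?inE ?negb_or ?(eq_sym p) ?hp ?andbT //.
    exact: notin_other_edge eE gE ge ae pe ap ag.
  rewrite setDUl dp addn1 !ltnS (leq_trans (leq_card_setU _ _).1) //.
  by apply: leq_add (card_edgeD gE ag ae) _; rewrite -(cards1 h) subset_leq_card ?subsetDl.
have qx : q \notin x := notin_other_edge eE xE xe pe qe pq px.
have hx : h \notin x by apply/negP => hx; have := setI0_neq xh hx (set11 h); rewrite eqxx.
apply: (crown_legsF eE ae pe qe gE xE zE ag px qz); first by rewrite setIC.
  apply: setI0_from => t tg; rewrite Ez !inE => /orP[/orP[]|] /eqP tE; subst t.
  - by rewrite tg in qg.
  - by rewrite tg in hg.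
  - by apply: (notin_z a ae aq); rewrite -(deg_le1_edge_eq dc zE cz gE tg).
apply: setI0_from => t tx; rewrite Ez !inE => /orP[/orP[]|] /eqP tE; subst t.
- by rewrite tx in qx.
- by rewrite tx in hx.
- by apply: (notin_z p pe pq); rewrite -(deg_le1_edge_eq dc zE cz xE tx).
Qed.

Lemma near_big_deg_3_5_5F : False.
Proof.
have [/exists_inP [z zE /andP[qz hz]] | no_qh] := boolP [exists z in E, (q \in z) && (h \in z)].
  exact: near_big_common_edge zE qz hz.
exact: near_big_no_common_edge.
Qed.

End NearBig.

Definition fan (v p q : V) (e : {set V}) :=
  [/\ e \in E, e = [set v; p; q], d v = 5, 4 <= d p & 4 <= d q].

Lemma fanC v p q e : fan v p q e -> fan v q p e.
Proof. by case=> eE Ee *; split; rewrite // Ee setUAC. Qed.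

Lemma fan_mem v p q e : fan v p q e -> [/\ v \in e, p \in e & q \in e].
Proof. by case=> _ -> *; rewrite !inE !eqxx !orbT. Qed.

Lemma edge3_neq e x y z : e \in E -> e = [set x; y; z] -> [/\ x != y, x != z & y != z].
Proof.
move=> eE Ee; move: (card_edge eE); rewrite Ee -setUA cardsU1 cards2 !inE negb_or.
by case: (x =P y); case: (x =P z); case: (y =P z).
Qed.

(* The edges through [v] other than [e] are the legs of [e] at [v], and
   [trace v e x] is the set of legs that [x] meets; the edges through another
   vertex [o] of [e] are the spokes of [e] at [o]. *)
Definition trace (v : V) (e x : {set V}) := [set g in star v :\ e | g :&: x != set0].

Lemma trace_sub v e x : trace v e x \subset star v :\ e.
Proof. by apply/subsetP => g; rewrite inE => /andP[]. Qed.

Lemma trace_legs v e x g : g \in trace v e x -> g \in star v :\ e.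
Proof. exact: subsetP (trace_sub v e x) g. Qed.

Lemma mem_trace v e (x : {set V}) g c : g \in star v :\ e -> c \in g -> c \in x -> g \in trace v e x.
Proof. by move=> gl cg cx; rewrite inE gl; apply/set0Pn; exists c; rewrite inE cg cx. Qed.

Lemma trace_meet v e x g : g \in trace v e x -> g :&: x != set0.
Proof. by rewrite inE => /andP[]. Qed.

Lemma notin_trace v e x g : g \in star v :\ e -> g \notin trace v e x -> g :&: x = set0.
Proof. by move=> gl; rewrite inE gl /= => /negPn/eqP. Qed.

Section Fan.
Variables (v p q : V) (e1 : {set V}).
Hypothesis fan1 : fan v p q e1.
Implicit Types (x y X : {set V}).

Let e1E : e1 \in E. Proof. by case: fan1. Qed.
Let Ee1 : e1 = [set v; p; q]. Proof. by case: fan1. Qed.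
Let ve1 : v \in e1. Proof. by case: (fan_mem fan1). Qed.
Let pe1 : p \in e1. Proof. by case: (fan_mem fan1). Qed.
Let qe1 : q \in e1. Proof. by case: (fan_mem fan1). Qed.
Let vp : v != p. Proof. by case: (edge3_neq e1E Ee1). Qed.
Let vq : v != q. Proof. by case: (edge3_neq e1E Ee1). Qed.
Let pq : p != q. Proof. by case: (edge3_neq e1E Ee1). Qed.
Let dv : d v = 5. Proof. by case: fan1. Qed.
Let dp : 4 <= d p. Proof. by case: fan1. Qed.
Let dq : 4 <= d q. Proof. by case: fan1. Qed.

Local Notation legs := (star v :\ e1).
Local Notation spokes o := (star o :\ e1).
Local Notation T := (trace v e1).

Lemma leg_spec g : g \in legs -> [/\ g \in E, v \in g, p \notin g & q \notin g].
Proof.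
rewrite in_starD1 => /and3P[ge gE vg]; split => //.
  exact: notin_other_edge e1E gE ge ve1 pe1 vp vg.
exact: notin_other_edge e1E gE ge ve1 qe1 vq vg.
Qed.

Lemma p_spoke_spec x : x \in spokes p -> [/\ x \in E, p \in x, v \notin x & q \notin x].
Proof.
rewrite in_starD1 => /and3P[xe xE px]; split => //.
  by apply: (notin_other_edge e1E xE xe pe1 ve1); rewrite // eq_sym.
exact: notin_other_edge e1E xE xe pe1 qe1 pq px.
Qed.

Lemma q_spoke_spec y : y \in spokes q -> [/\ y \in E, q \in y, v \notin y & p \notin y].
Proof.
rewrite in_starD1 => /and3P[ye yE qy]; split => //.
  by apply: (notin_other_edge e1E yE ye qe1 ve1); rewrite // eq_sym.
by apply: (notin_other_edge e1E yE ye qe1 pe1); rewrite // eq_sym.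
Qed.

Lemma card_legs : #|legs| = 4.
Proof. by move: dv; rewrite degE (cardsD1 e1) inE e1E ve1 add1n => -[]. Qed.

Lemma three_le_card_spokes : 3 <= #|spokes p|.
Proof. by move: dp; rewrite degE (cardsD1 e1) inE e1E pe1 add1n. Qed.

Lemma partner x : x \in spokes p -> exists2 y, y \in spokes q & x :&: y = set0.
Proof.
move=> /[dup] xs /p_spoke_spec[xE px _ qx].
have [y [yE qy ye yx]] : exists y, [/\ y \in E, q \in y, y != e1 & y :&: x = set0].
  by apply: exists_leg => //; apply: leq_trans dq; rewrite addn1 !ltnS (card_edgeD xE px pe1).
by exists y; rewrite ?in_starD1 ?ye ?yE ?qy // setIC.
Qed.

Lemma legs_meet_union x y g : x \in spokes p -> y \in spokes q -> x :&: y = set0 ->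
  g \in legs -> g :&: (x :|: y) != set0.
Proof.
move=> /p_spoke_spec[xE px _ _] /q_spoke_spec[yE qy _ _] xy /leg_spec[gE vg _ _].
apply/negP; rewrite setIUr setU_eq0 => /andP[/eqP gx /eqP gy].
exact: crown_legsF e1E ve1 pe1 qe1 gE xE yE vg px qy gx gy xy.
Qed.

Lemma four_le_card_hitting X : v \notin X -> (forall g, g \in legs -> g :&: X != set0) ->
  4 <= #|X|.
Proof.
move=> vX hit; rewrite -card_legs; apply: leq_card_transversal => // g g' gl g'l gg'.
have [gE vg _ _] := leg_spec gl; have [g'E vg' _ _] := leg_spec g'l.
apply: setI0_from => t; rewrite inE => /andP[tg tg'] tX.
have vt : v != t by apply: contraNneq vX => ->.
by move/eqP: gg'; apply; apply: (edge_eq gE g'E vt).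
Qed.

(* Otherwise the at most three other points of [x :|: y] would meet all four legs. *)
Lemma leg_single_hit x y u : x \in spokes p -> y \in spokes q -> x :&: y = set0 ->
  u \in x :|: y -> u != p -> u != q ->
  exists g, [/\ g \in legs, u \in g & g :&: (x :|: y) \subset [set u]].
Proof.
move=> xs ys xy uxy up uq.
have [xE px vx _] := p_spoke_spec xs; have [yE qy vy _] := q_spoke_spec ys.
pose X := ((x :\ p) :|: (y :\ q)) :\ u.
have cardX : #|X| <= 3.
  have uX : u \in (x :\ p) :|: (y :\ q) by rewrite !inE up uq -in_setU.
  move: (leq_card_setU (x :\ p) (y :\ q)).1.
  by rewrite (card_edgeD1 xE px) (card_edgeD1 yE qy) (cardsD1 u) uX add1n.
have vX : v \notin X by apply/negP; rewrite !inE => /andP[_ /orP[] /andP[_]]; apply/negP.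
have [g gl gX] : exists2 g, g \in legs & g :&: X = set0.
  have [/exists_inP[g gl /eqP gX] | /exists_inPn miss] :=
    boolP [exists g in legs, g :&: X == set0]; first by exists g.
  by move: cardX; rewrite leqNgt (four_le_card_hitting vX miss).
have [gE vg pg qg] := leg_spec gl.
have sub : g :&: (x :|: y) \subset [set u].
  apply/subsetP => t /setIP[tg txy]; rewrite inE; apply: contraT => tu.
  have tX : t \in X.
    rewrite !inE tu /=; case/setUP: txy => [tx | ty]; apply/orP; [left | right].
      by rewrite tx andbT; apply: contraNneq pg => <-.
    by rewrite ty andbT; apply: contraNneq qg => <-.
  by have := setI0_neq gX tg tX; rewrite eqxx.
exists g; split => //.
have /set0Pn[t /[dup] /setIP[tg _] /(subsetP sub)] := legs_meet_union xs ys xy gl.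
by rewrite inE => /eqP <-.
Qed.

Lemma leg_through x u : x \in spokes p -> u \in x -> u != p -> exists2 g, g \in legs & u \in g.
Proof.
move=> xs ux up; have [y ys xy] := partner xs; have [_ _ _ qx] := p_spoke_spec xs.
have uq : u != q by apply: contraNneq qx => <-.
have uxy : u \in x :|: y by rewrite inE ux.
have [g [gl ug _]] := leg_single_hit xs ys xy uxy up uq.
by exists g.
Qed.

Lemma trace_disjoint x y : x \in spokes p -> y \in spokes q -> x :&: y = set0 ->
  T x :&: T y = set0.
Proof.
move=> xs ys xy; have [_ _ vx _] := p_spoke_spec xs; have [_ _ vy _] := q_spoke_spec ys.
apply: setI0_from => g /setIdP[gl /set0Pn[u1 /setIP[u1g u1x]]] /setIdP[_ /set0Pn[u2 /setIP[u2g u2y]]].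
have [g0E vg pg qg] := leg_spec gl.
have u2xy : u2 \in x :|: y by rewrite inE u2y orbT.
have [up uq] : u2 != p /\ u2 != q by split; [apply: contraNneq pg | apply: contraNneq qg] => <-.
have [g' [g'l u2g' sub]] := leg_single_hit xs ys xy u2xy up uq.
have [g'E vg' _ _] := leg_spec g'l.
have vu2 : v != u2 by apply: contraNneq vy => ->.
have g'g := edge_eq g'E g0E vu2 vg' u2g' vg u2g; subst g'.
have /(subsetP sub) : u1 \in g :&: (x :|: y) by rewrite !inE u1g u1x.
by rewrite inE; apply/negP; apply: setI0_neq xy u1x u2y.
Qed.

Lemma trace_partner x y : x \in spokes p -> y \in spokes q -> x :&: y = set0 ->
  T y = legs :\: T x.
Proof.
move=> xs ys xy; apply/eqP; rewrite eqEsubset; apply/andP; split; apply/subsetP => g.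
  move=> gy; rewrite inE (trace_legs gy) andbT.
  by apply/negP => gx; move/setP/(_ g): (trace_disjoint xs ys xy); rewrite inE gx gy inE.
rewrite inE => /andP[gx gl]; rewrite inE gl /=.
have := legs_meet_union xs ys xy gl; rewrite setIUr setU_eq0 negb_and.
by move: gx; rewrite inE gl /= => /negPn -> /=.
Qed.

Lemma trace_partnerC x y : x \in spokes p -> y \in spokes q -> x :&: y = set0 ->
  T x = legs :\: T y.
Proof.
move=> xs ys xy; rewrite (trace_partner xs ys xy) setDDr setDv set0U.
by apply/esym/setIidPr; apply: trace_sub.
Qed.

Lemma card_trace x : x \in spokes p -> #|T x| = 2.
Proof.
move=> xs; have [xE px vx _] := p_spoke_spec xs.
have [u1 [u2 [Ex pu1 pu2 u12]]] := edge_split xE px.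
have [u1x u2x] : u1 \in x /\ u2 \in x by rewrite Ex !inE !eqxx !orbT.
have [u1p u2p] : u1 != p /\ u2 != p by rewrite !(eq_sym _ p).
have [g1 g1l u1g1] := leg_through xs u1x u1p.
have [g2 g2l u2g2] := leg_through xs u2x u2p.
have [g1E vg1 pg1 _] := leg_spec g1l; have [g2E vg2 pg2 _] := leg_spec g2l.
have g12 : g1 != g2.
  by apply: contraNneq vx => g12; rewrite (edge_eq xE g1E u12 u1x u2x u1g1) // g12.
suff -> : T x = [set g1; g2] by rewrite cards2 g12.
apply/setP => g; rewrite in_set2; apply/idP/orP => [/setIdP[gl /set0Pn[t /setIP[tg tx]]] | ].
  have [gE vg pg _] := leg_spec gl.
  have vt : v != t by apply: contraNneq vx => ->.
  move: tx; rewrite Ex !inE => /orP[/orP[]|] /eqP tE; subst t; first by rewrite tg in pg.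
    by left; apply/eqP; apply: (edge_eq gE g1E vt).
  by right; apply/eqP; apply: (edge_eq gE g2E vt).
by case=> /eqP ->; [apply: mem_trace g1l u1g1 u1x | apply: mem_trace g2l u2g2 u2x].
Qed.

Lemma card_spokes_traced g : g \in legs -> #|[set x in spokes p | g \in T x]| <= 2.
Proof.
move=> gl; have [gE vg pg _] := leg_spec gl; rewrite -(card_edgeD1 gE vg).
apply: leq_card_transversal => [x | x x'].
  move=> /setIdP[xs /setIdP[_ /set0Pn[t /setIP[tg tx]]]].
  have [_ _ vx _] := p_spoke_spec xs.
  by apply/set0Pn; exists t; rewrite !inE tx tg andbT; apply: contraNneq vx => <-.
move=> /setIdP[xs _] /setIdP[x's _] xx'.
have [xE px _ _] := p_spoke_spec xs; have [x'E px' _ _] := p_spoke_spec x's.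
apply: setI0_from => t; rewrite !inE => /andP[tx tx'] /andP[_ tg].
have pt : p != t by apply: contraNneq pg => ->.
by move/eqP: xx'; apply; apply: (edge_eq xE x'E pt).
Qed.

Lemma exists_spoke_untraced g : g \in legs -> exists2 x, x \in spokes p & g \notin T x.
Proof.
move=> gl; have : ~~ (spokes p \subset [set x in spokes p | g \in T x]).
  apply/negP => /subset_leq_card; rewrite leqNgt.
  by rewrite (leq_ltn_trans (card_spokes_traced gl)) // three_le_card_spokes.
by case/subsetPn => x xs; rewrite inE xs /= => ?; exists x.
Qed.

Lemma trace_cross x1 y1 x : x1 \in spokes p -> y1 \in spokes q -> x1 :&: y1 = set0 ->
  x \in spokes p -> T x != T x1 ->
  exists c g, [/\ c \in x :&: y1, g \in T x :\: T x1 & c \in g].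
Proof.
move=> x1s y1s x1y1 xs Tx; have [_ _ _ py1] := q_spoke_spec y1s.
have [a ax ax1] : exists2 a, a \in T x & a \notin T x1.
  apply/subsetPn; apply: contra Tx => sub.
  by rewrite eqEcard sub (card_trace x1s) (card_trace xs).
have ay1 : a \in T y1.
  by rewrite (trace_partner x1s y1s x1y1) inE ax1 (trace_legs ax).
have [c cxy1] : exists c, c \in x :&: y1.
  apply/set0Pn; apply/negP => /eqP xy1.
  by move: (trace_disjoint xs y1s xy1) => /setP/(_ a); rewrite inE ax ay1 inE.
have [cx cy1] := setIP cxy1.
have cp : c != p by apply: contraNneq py1 => <-.
have [g gl cg] := leg_through xs cx cp.
exists c, g; split => //; rewrite inE (mem_trace gl cg cx) andbT.
by move: (mem_trace gl cg cy1); rewrite (trace_partner x1s y1s x1y1) inE => /andP[].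
Qed.

Lemma leg_cross_eq x x' y g c c' : x \in spokes p -> x' \in spokes p -> y \in spokes q ->
  g \in legs -> c \in x :&: y -> c' \in x' :&: y -> c \in g -> c' \in g -> x = x'.
Proof.
move=> /p_spoke_spec[xE px _ _] /p_spoke_spec[x'E px' _ _] /q_spoke_spec[yE qy _ _].
move=> /leg_spec[gE _ pg qg] cxy c'x'y cg c'g.
by apply: (cross_edge_eq (c := c) (c' := c') gE xE x'E yE pg qg px px' qy);
  rewrite in_setI ?cxy ?c'x'y.
Qed.

(* If the traces of [x1] and [x2] share a leg but differ, a third spoke [x3] missing
   that leg yields, through the partners [y1] and [y2], five distinct legs unless
   [y1 = y2], in which case the traces are equal after all. *)
Lemma trace_eq_of_meet x1 x2 : x1 \in spokes p -> x2 \in spokes p ->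
  T x1 :&: T x2 != set0 -> T x1 = T x2.
Proof.
move=> x1s x2s /set0Pn[g0 /setIP[g0x1 g0x2]]; apply/eqP; apply: contraT => neq.
have [y1 y1s x1y1] := partner x1s; have [y2 y2s x2y2] := partner x2s.
have [ca [ga [cay /setDP[gax2 gax1] caga]]] :
    exists c g, [/\ c \in x2 :&: y1, g \in T x2 :\: T x1 & c \in g].
  by apply: trace_cross; rewrite // eq_sym.
have [cb [gb [cby /setDP[gbx1 gbx2] cbgb]]] := trace_cross x2s y2s x2y2 x1s neq.
have [x3 x3s g0x3] := exists_spoke_untraced (trace_legs g0x1).
have [x31 x32] : T x3 != T x1 /\ T x3 != T x2 by split; apply: contraNneq g0x3 => ->.
have [c1 [g [c1y /setDP[gx3 gx1] c1g]]] := trace_cross x1s y1s x1y1 x3s x31.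
have [c2 [g' [c2y /setDP[g'x3 g'x2] c2g']]] := trace_cross x2s y2s x2y2 x3s x32.
have gga : g != ga.
  apply: contraNneq x32 => gga; rewrite (leg_cross_eq x3s x2s y1s (trace_legs gax2) c1y cay) //.
  by rewrite -gga.
have g'gb : g' != gb.
  apply: contraNneq x31 => g'gb; rewrite (leg_cross_eq x3s x1s y2s (trace_legs gbx1) c2y cby) //.
  by rewrite -g'gb.
have gg' : g = g'.
  apply/eqP; apply: contraT => gg'; suff : 5 <= #|legs| by rewrite card_legs.
  apply/card_geqP; exists [:: g0; ga; gb; g; g']; split=> //.
    rewrite /= !inE !negb_or (mem_notin_neq g0x1 gax1) (mem_notin_neq g0x2 gbx2).
    rewrite (mem_notin_neq g0x1 gx1) (mem_notin_neq g0x2 g'x2) (mem_notin_neq gax2 gbx2).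
    by rewrite eq_sym gga (mem_notin_neq gax2 g'x2) (mem_notin_neq gbx1 gx1) eq_sym g'gb gg'.
  move=> h; rewrite !inE -in_starD1 => /or4P[| | | /orP[]] /eqP->; apply: trace_legs;
    [exact: g0x1 | exact: gax2 | exact: gbx1 | exact: gx3 | exact: g'x3].
subst g'; suff T12 : T x1 = T x2 by rewrite T12 eqxx in neq.
have [gE _ pg qg] := leg_spec (trace_legs gx3); have [x3E px3 _ _] := p_spoke_spec x3s.
have [y1E qy1 _ _] := q_spoke_spec y1s; have [y2E qy2 _ _] := q_spoke_spec y2s.
rewrite (trace_partnerC x1s y1s x1y1) (trace_partnerC x2s y2s x2y2).
congr (_ :\: T _).
apply: (cross_edge_eq (c := c1) (c' := c2) gE y1E y2E x3E qg pg qy1 qy2 px3);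
  by rewrite in_setI setIC ?c1y ?c2y.
Qed.

Lemma trace_dichotomy x0 x : x0 \in spokes p -> x \in spokes p ->
  T x = T x0 \/ T x = legs :\: T x0.
Proof.
move=> x0s xs; have [meet | /negPn/eqP disj] := boolP (T x :&: T x0 != set0).
  by left; apply: trace_eq_of_meet.
right; apply/eqP; rewrite eqEcard cardsDS ?trace_sub // card_legs !card_trace // andbT.
apply/subsetP => g gx; rewrite inE (trace_legs gx) andbT.
by apply/negP => gx0; move/setP/(_ g): disj; rewrite inE gx gx0 inE.
Qed.

End Fan.

Lemma exists_leg_missing v o e e' : e \in E -> e' \in E -> e' != e -> v \in e -> v \in e' ->
  o \in e -> v != o -> 4 <= d o -> exists b, [/\ b \in E, o \in b, b != e & b :&: e' = set0].
Proof.
move=> eE e'E e'e ve ve' oe vo dgo.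
apply: exists_leg => //; first exact: notin_other_edge eE e'E e'e ve oe vo ve'.
by apply: leq_trans dgo; rewrite addn1 !ltnS (card_edgeD e'E ve' ve).
Qed.

Definition classified v p q e e' (B : {set {set V}}) := forall x,
  x \in (star p :|: star q) :\ e -> trace v e x = if x :&: e' == set0 then B else (star v :\ e) :\: B.

Lemma classifiedC v p q e e' B : classified v p q e e' B -> classified v q p e e' B.
Proof. by move=> cls x; rewrite setUC; apply: cls. Qed.

Lemma fan_classes v p q e1 e2 : fan v p q e1 -> e2 \in star v :\ e1 ->
  exists B : {set {set V}}, [/\ B \subset star v :\ e1, #|B| = 2 & classified v p q e1 e2 B].
Proof.
move=> fan1 /[dup] e2l; rewrite in_starD1 => /and3P[e21 e2E ve2].
have [e1E Ee1 _ dp _] := fan1; have [ve1 pe1 _] := fan_mem fan1.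
have [vp _ _] := edge3_neq e1E Ee1.
have [x0 [x0E px0 x0e1 x0e2]] := exists_leg_missing e1E e2E e21 ve1 ve2 pe1 vp dp.
have x0s : x0 \in star p :\ e1 by rewrite in_starD1 x0e1 x0E px0.
have [y0 y0s x0y0] := partner fan1 x0s.
have e2B : e2 \notin trace v e1 x0 by rewrite inE e2l setIC x0e2 eqxx.
have classes x : x \in (star p :|: star q) :\ e1 ->
    trace v e1 x = trace v e1 x0 \/ trace v e1 x = (star v :\ e1) :\: trace v e1 x0.
  rewrite setDUl => /setUP[xs | xs]; first by case: (trace_dichotomy fan1 x0s xs); [left | right].
  rewrite -(trace_partner fan1 x0s y0s x0y0) (trace_partnerC fan1 x0s y0s x0y0).
  by case: (trace_dichotomy (fanC fan1) y0s xs); [right | left].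
exists (trace v e1 x0); split; [exact: trace_sub | exact: (card_trace fan1 x0s) |].
move=> x /classes Tx; have e2x : (e2 \in trace v e1 x) = (x :&: e2 != set0).
  by rewrite inE e2l setIC.
case: Tx e2x => ->; first by rewrite (negbTE e2B) => /esym/negbFE ->.
by rewrite inE e2B e2l => /esym/negbTE ->.
Qed.

Lemma card_crossing_le4 v gk gl (W : {set {set V}}) : gk \in E -> gl \in E ->
  v \in gk -> v \in gl -> gk != gl ->
  (forall f, f \in W -> [/\ f \in E, v \notin f, f :&: gk != set0 & f :&: gl != set0]) ->
  #|W| <= 4.
Proof.
move=> gkE glE vk vl kl HW.
pose pt A f := odflt v [pick u in f :&: A].
have ptP A f : f :&: A != set0 -> pt A f \in f :&: A.
  by rewrite /pt; case: pickP => [u -> // | none] /set0Pn[u]; rewrite none.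
pose pts f := (pt gk f, pt gl f).
have pts_inj : {in W &, injective pts}.
  move=> f f' fW f'W [ek el]; have [fE vf fk fl] := HW f fW; have [f'E _ f'k f'l] := HW f' f'W.
  move: (ptP _ _ fk) (ptP _ _ fl) (ptP _ _ f'k) (ptP _ _ f'l); rewrite -ek -el.
  move=> /setIP[kf kk] /setIP[lf ll] /setIP[kf' _] /setIP[lf' _].
  have kl_pt : pt gk f != pt gl f.
    apply/eqP => kle; move/eqP: kl; apply.
    have kv : pt gk f != v by apply: contraNneq vf => <-.
    by apply: (edge_eq gkE glE kv) => //; rewrite kle.
  exact: edge_eq fE f'E kl_pt kf lf kf' lf'.
rewrite -(card_in_imset pts_inj) (leq_trans _ (_ : #|setX (gk :\ v) (gl :\ v)| <= 4)) //.
  apply/subset_leq_card/subsetP => _ /imsetP[f fW ->]; have [_ vf fk fl] := HW f fW.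
  move: (ptP _ _ fk) (ptP _ _ fl) => /setIP[kf kk] /setIP[lf ll].
  by rewrite !inE kk ll !andbT; apply/andP; split; apply: contraNneq vf => <-.
by rewrite cardsX !card_edgeD1.
Qed.

(* A spoke at [p] meeting [e'] contains [q'], and at most one does. *)
Lemma two_le_card_spokes_missing v p p' q' e e' : e \in E -> v \in e -> p \in e -> v != p ->
  4 <= d p -> e' \in E -> e' = [set v; p'; q'] -> e' != e ->
  ~~ [exists z in E, (p \in z) && (p' \in z)] ->
  2 <= #|[set x in star p :\ e | x :&: e' == set0]|.
Proof.
move=> eE ve pe vp dp e'E Ee' e'e no_pp'.
have vq' : v != q' by case: (edge3_neq e'E Ee').
have q'e' : q' \in e' by rewrite Ee' !inE eqxx orbT.
have ve' : v \in e' by rewrite Ee' !inE eqxx.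
have pq' : p != q'.
  apply/eqP => pq'; move/eqP: e'e; apply; apply: (edge_eq e'E eE vp) => //; by rewrite pq'.
have meet_q' y : y \in star p :\ e -> ~~ (y :&: e' == set0) -> q' \in y.
  rewrite in_starD1 => /and3P[ye yE py] /set0Pn[t /setIP[ty]].
  rewrite Ee' !inE => /orP[/orP[]|] /eqP tE; subst t => //.
    by rewrite (edge_eq yE eE vp ty py ve pe) eqxx in ye.
  by case/exists_inP: no_pp'; exists y; rewrite ?py.
have meet1 : #|[set x in star p :\ e | ~~ (x :&: e' == set0)]| <= 1.
  apply/card_le1_eqP => x x' /setIdP[xs xm] /setIdP[x's x'm].
  move: (xs) (x's); rewrite !in_starD1 => /and3P[_ xE px] /and3P[_ x'E px'].
  apply/esym; exact: (edge_eq xE x'E pq' px (meet_q' x xs xm) px' (meet_q' x' x's x'm)).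
have three : 3 <= #|star p :\ e| by move: dp; rewrite degE (cardsD1 e) inE eE pe add1n.
move: (card_sepID (star p :\ e) (fun x => x :&: e' == set0)) three meet1 => /= -> three le1.
by rewrite -(leq_add2r 1) (leq_trans three) // leq_add2l.
Qed.

Lemma classes_char v e z (B : {set {set V}}) : B \subset star v :\ e ->
  trace v e z = (star v :\ e) :\: B -> e :&: z != set0 ->
  B = [set g in star v | g :&: z == set0].
Proof.
move=> BL Tz ez; apply/setP => g; rewrite inE; apply/idP/andP => [gB | [gv gz]].
  have gl := subsetP BL g gB; move: (gl); rewrite in_starD1 => /and3P[_ gE vg].
  split; first by rewrite inE gE vg.
  by apply/eqP/(notin_trace gl); rewrite Tz inE gB.
have ge : g != e by apply: contraTneq gz => ->.
have gl : g \in star v :\ e by rewrite in_setD1 ge gv.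
apply: contraT => gB; have : g \in trace v e z by rewrite Tz inE gB gl.
by move/trace_meet; rewrite gz.
Qed.

Lemma crossing_side v p k1 k2 l1 l2 b : b \in E -> [set p; k1; l1] \in E -> k1 != l1 ->
  v \notin b -> p \notin b -> b :&: [set p; k1; l1] != set0 ->
  b :&: [set v; k1; k2] != set0 -> b :&: [set v; l1; l2] != set0 ->
  if k1 \in b then l2 \in b else (k2 \in b) && (l1 \in b).
Proof.
move=> bE bpE k1l1 vb pb /set0Pn[c /setIP[cb cbp]].
move=> /set0Pn[k /setIP[kb kgk]] /set0Pn[l /setIP[lb lgl]].
have not_both : (k1 \in b) && (l1 \in b) = false.
  apply/andP => -[k1b l1b]; move: pb; apply/negP/negPn.
  by rewrite -(edge_eq bpE bE k1l1 _ _ k1b l1b) !inE ?eqxx ?orbT.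
have [vk vl] : v != k /\ v != l by split; apply: contraNneq vb => ->.
have kE : (k == k1) || (k == k2) by move: kgk; rewrite !inE (eq_sym k v) (negbTE vk).
have lE : (l == l1) || (l == l2) by move: lgl; rewrite !inE (eq_sym l v) (negbTE vl).
have [k1b | k1b] := boolP (k1 \in b).
  case/orP: lE => /eqP lE; last by rewrite -lE.
  by move: not_both; rewrite k1b -lE lb.
case/orP: kE => /eqP kE; first by rewrite -kE kb in k1b.
rewrite -kE kb /=; move: cbp; rewrite !inE => /orP[/orP[]|] /eqP cE.
- by rewrite -cE cb in pb.
- by rewrite -cE cb in k1b.
- by rewrite -cE.
Qed.

(* By [crossing_side], such an edge [b] is determined by whether [k1 \in b]. *)
Lemma card_crossing_le2 v p bp gk gl : bp \in E -> gk \in E -> gl \in E -> p \in bp ->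
  v \in gk -> v \in gl -> gk != gl -> v \notin bp -> p \notin gk -> p \notin gl ->
  bp :&: gk != set0 -> bp :&: gl != set0 ->
  #|[set b in E | [&& v \notin b, p \notin b, b :&: bp != set0,
                     b :&: gk != set0 & b :&: gl != set0]]| <= 2.
Proof.
move=> bpE gkE glE pbp vgk vgl kl vbp pgk pgl.
move=> /set0Pn[k1 /setIP[k1bp k1gk]] /set0Pn[l1 /setIP[l1bp l1gl]].
have [vk1 vl1] : v != k1 /\ v != l1 by split; apply: contraNneq vbp => ->.
have neq_gk_gl u w : u \in gk -> w \in gl -> v != u -> u != w.
  move=> ugk wgl vu; apply: contraNneq kl => uw; apply/eqP.
  by apply: (edge_eq gkE glE vu) => //; rewrite uw.
have [k2 [Egk k2v _]] := edge_third gkE vgk k1gk vk1.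
have [l2 [Egl l2v _]] := edge_third glE vgl l1gl vl1.
have [l2gl k2gk] : l2 \in gl /\ k2 \in gk by rewrite Egl Egk !inE !eqxx !orbT.
have k1l1 := neq_gk_gl _ _ k1gk l1gl vk1.
have k1l2 := neq_gk_gl _ _ k1gk l2gl vk1.
have k2l1 : k2 != l1 by apply: neq_gk_gl; rewrite // eq_sym.
have Ebp : bp = [set p; k1; l1].
  have [pk1 pl1] : p != k1 /\ p != l1 by split; [apply: contraNneq pgk | apply: contraNneq pgl] => ->.
  exact: edge_set3.
set S := [set b in E | _].
have side b : b \in S -> b \in E /\ if k1 \in b then l2 \in b else (k2 \in b) && (l1 \in b).
  rewrite inE => /andP[bE /and5P[vb pb bbp bgk bgl]]; split=> //.
  by apply: (crossing_side bE _ k1l1 vb pb); rewrite -?Ebp -?Egk -?Egl.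
have side_inj : {in S &, injective (fun b : {set V} => k1 \in b)}.
  move=> b b' /side[bE Pb] /side[b'E Pb'] /= eqk; move: Pb Pb'; rewrite -eqk.
  case k1b: (k1 \in b).
    by move=> l2b l2b'; apply: (edge_eq bE b'E k1l2); rewrite // -eqk.
  by move=> /andP[k2b l1b] /andP[k2b' l1b']; apply: (edge_eq bE b'E k2l1).
by rewrite (leq_trans (leq_card_in _ _ side_inj)) ?card_bool.
Qed.

Section TwoFans.
Variables (v p q p' q' : V) (e1 e2 : {set V}).
Hypotheses (fan1 : fan v p q e1) (fan2 : fan v p' q' e2) (e12 : e1 != e2).

Let e1E : e1 \in E. Proof. by case: fan1. Qed.
Let e2E : e2 \in E. Proof. by case: fan2. Qed.
Let Ee1 : e1 = [set v; p; q]. Proof. by case: fan1. Qed.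
Let Ee2 : e2 = [set v; p'; q']. Proof. by case: fan2. Qed.
Let dp : 4 <= d p. Proof. by case: fan1. Qed.
Let dq : 4 <= d q. Proof. by case: fan1. Qed.
Let dp' : 4 <= d p'. Proof. by case: fan2. Qed.
Let dq' : 4 <= d q'. Proof. by case: fan2. Qed.
Let ve1 : v \in e1. Proof. by case: (fan_mem fan1). Qed.
Let pe1 : p \in e1. Proof. by case: (fan_mem fan1). Qed.
Let qe1 : q \in e1. Proof. by case: (fan_mem fan1). Qed.
Let ve2 : v \in e2. Proof. by case: (fan_mem fan2). Qed.
Let p'e2 : p' \in e2. Proof. by case: (fan_mem fan2). Qed.
Let q'e2 : q' \in e2. Proof. by case: (fan_mem fan2). Qed.
Let vp : v != p. Proof. by case: (edge3_neq e1E Ee1). Qed.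
Let vq : v != q. Proof. by case: (edge3_neq e1E Ee1). Qed.
Let pq : p != q. Proof. by case: (edge3_neq e1E Ee1). Qed.
Let vp' : v != p'. Proof. by case: (edge3_neq e2E Ee2). Qed.
Let vq' : v != q'. Proof. by case: (edge3_neq e2E Ee2). Qed.
Let p'q' : p' != q'. Proof. by case: (edge3_neq e2E Ee2). Qed.
Let e21 : e2 != e1. Proof. by rewrite eq_sym. Qed.
Let off_e1 o : o \in e2 -> v != o -> o \notin e1.
Proof. by move=> oe2 vo; apply: (notin_other_edge e2E e1E e12 ve2 oe2 vo ve1). Qed.

(* Otherwise every spoke at [p'], of which there are at least three, has trace [B],
   but a leg in [B] is traced by at most two spokes. *)
Lemma exists_spoke_meeting (B : {set {set V}}) : B \subset star v :\ e2 -> #|B| = 2 ->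
  classified v p' q' e2 e1 B -> exists2 z, z \in star p' :\ e2 & z :&: e1 != set0.
Proof.
move=> BL cardB cls2; have [g gB] : exists g, g \in B by apply/set0Pn; rewrite -card_gt0 cardB.
have [/exists_inP[z zs ze1] | none] := boolP [exists z in star p' :\ e2, z :&: e1 != set0].
  by exists z.
have : star p' :\ e2 \subset [set x in star p' :\ e2 | g \in trace v e2 x].
  apply/subsetP => x xs; rewrite inE xs cls2; last by rewrite setDUl inE xs.
  by move/exists_inPn: none => /(_ x xs) /negPn ->.
move/subset_leq_card/leq_trans/(_ (card_spokes_traced fan2 (subsetP BL g gB))).
by rewrite leqNgt (three_le_card_spokes fan2).
Qed.

(* Both classes consist of the edges through [v] missing a spoke at [p'] that meets [e1]. *)
Lemma fan_classes_eq B1 B2 : B1 \subset star v :\ e1 -> classified v p q e1 e2 B1 ->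
  B2 \subset star v :\ e2 -> #|B2| = 2 -> classified v p' q' e2 e1 B2 -> B1 = B2.
Proof.
move=> BL1 cls1 BL2 cardB2 cls2.
have [z zs /[dup] ze1 /set0Pn[t /setIP[tz te1]]] := exists_spoke_meeting BL2 cardB2 cls2.
move: (zs); rewrite in_starD1 => /and3P[ze2 zE p'z].
have vz : v \notin z by apply: (notin_other_edge e2E zE ze2 p'e2 ve2); rewrite // eq_sym.
have z1 : z \in (star p :|: star q) :\ e1.
  have ze1' : z != e1 by apply: contraNneq (off_e1 p'e2 vp') => <-.
  rewrite setDUl inE !in_starD1 ze1' zE /=.
  move: te1; rewrite Ee1 !inE => /orP[/orP[] | ] /eqP tE; subst t.
  - by rewrite tz in vz.
  - by rewrite tz.
  - by rewrite tz orbT.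
have ze2' : z :&: e2 != set0 by apply/set0Pn; exists p'; rewrite inE p'z.
have := cls1 z z1; rewrite (negbTE ze2') => /classes_char -> //; last by rewrite setIC.
have := cls2 z; rewrite setDUl inE zs (negbTE ze1) => /(_ isT) /classes_char -> //.
by rewrite setIC.
Qed.

Section SharedClasses.
Variables gk gl : {set V}.
Hypotheses (gkl : gk \in star v :\ e1) (gll : gl \in star v :\ e1) (kl : gk != gl)
  (cls1 : classified v p q e1 e2 [set gk; gl]) (cls2 : classified v p' q' e2 e1 [set gk; gl]).

Let gkE : gk \in E. Proof. by case: (leg_spec fan1 gkl). Qed.
Let glE : gl \in E. Proof. by case: (leg_spec fan1 gll). Qed.
Let vgk : v \in gk. Proof. by case: (leg_spec fan1 gkl). Qed.
Let vgl : v \in gl. Proof. by case: (leg_spec fan1 gll). Qed.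

Let crosses e x : trace v e x = [set gk; gl] -> x :&: gk != set0 /\ x :&: gl != set0.
Proof.
by move=> Tx; rewrite !(setIC x); split; apply: (@trace_meet v e); rewrite Tx !inE eqxx ?orbT.
Qed.

Let missing_trace1 o x : o \in [set p; q] -> x \in star o :\ e1 -> x :&: e2 = set0 ->
  trace v e1 x = [set gk; gl].
Proof.
move=> oPQ xs xe2; rewrite cls1 ?xe2 ?eqxx // setDUl inE.
by case/set2P: oPQ => <-; rewrite xs ?orbT.
Qed.

Let missing_trace2 o x : o \in [set p'; q'] -> x \in star o :\ e2 -> x :&: e1 = set0 ->
  trace v e2 x = [set gk; gl].
Proof.
move=> oPQ xs xe1; rewrite cls2 ?xe1 ?eqxx // setDUl inE.
by case/set2P: oPQ => <-; rewrite xs ?orbT.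
Qed.

(* Otherwise the spokes at [p] missing [e2], the spokes at [p'] missing [e1] and
   a spoke at [q] missing [e2] are at least five edges avoiding [v] and meeting
   both [gk] and [gl]. *)
Lemma common_edge : exists2 z, z \in E & (p \in z) && (p' \in z).
Proof.
have [/exists_inP[z zE pp'z] | no_pp'] := boolP [exists z in E, (p \in z) && (p' \in z)].
  by exists z.
have [be [beE qbe bee1 bee2]] := exists_leg_missing e1E e2E e21 ve1 ve2 qe1 vq dq.
have bes : be \in star q :\ e1 by rewrite in_starD1 bee1 beE qbe.
pose A1 := [set x in star p :\ e1 | x :&: e2 == set0].
pose A2 := [set x in star p' :\ e2 | x :&: e1 == set0].
have crossing f : f \in be |: (A1 :|: A2) ->
    [/\ f \in E, v \notin f, f :&: gk != set0 & f :&: gl != set0].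
  rewrite !inE -!in_starD1 => /orP[/eqP -> | /orP[] /andP[fs /eqP f0]].
  - have [bk bl] := crosses (missing_trace1 (set22 p q) bes bee2).
    by split=> //; apply: (notin_other_edge e1E beE bee1 qe1 ve1); rewrite // eq_sym.
  - have [bk bl] := crosses (missing_trace1 (set21 p q) fs f0).
    move: fs; rewrite in_starD1 => /and3P[fe1 fE pf].
    by split=> //; apply: (notin_other_edge e1E fE fe1 pe1 ve1); rewrite // eq_sym.
  - have [bk bl] := crosses (missing_trace2 (set21 p' q') fs f0).
    move: fs; rewrite in_starD1 => /and3P[fe2 fE p'f].
    by split=> //; apply: (notin_other_edge e2E fE fe2 p'e2 ve2); rewrite // eq_sym.
have := card_crossing_le4 gkE glE vgk vgl kl crossing.
have beA : be \notin A1 :|: A2.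
  apply/negP; rewrite inE => /orP[/setIdP[/setD1P[_ /setIdP[_ pbe]] _] | /setIdP[_ /eqP be0]].
    by move: pbe; apply/negP; apply: (notin_other_edge e1E beE bee1 qe1 pe1); rewrite // eq_sym.
  by have := setI0_neq be0 qbe qe1; rewrite eqxx.
have A12 : A1 :&: A2 = set0.
  apply: setI0_from => x /setIdP[/setD1P[_ /setIdP[_ px]] _] /setIdP[_ /eqP x0].
  by have := setI0_neq x0 px pe1; rewrite eqxx.
have no_p'p : ~~ [exists z in E, (p' \in z) && (p \in z)].
  apply/negP => /exists_inP[z zE /andP[p'z pz]]; move/negP: no_pp'; apply.
  by apply/exists_inP; exists z; rewrite ?pz ?p'z.
have A1_2 := two_le_card_spokes_missing e1E ve1 pe1 vp dp e2E Ee2 e21 no_pp'.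
have A2_2 := two_le_card_spokes_missing e2E ve2 p'e2 vp' dp' e1E Ee1 e12 no_p'p.
rewrite cardsU1 beA cardsU A12 cards0 subn0 add1n ltnNge.
by rewrite (leq_add A1_2 A2_2).
Qed.

Lemma exists_free_leg : exists2 ej, ej \in (star v :\ e1) :\: [set gk; gl] & ej != e2.
Proof.
have : #|(star v :\ e1) :\: [set gk; gl]| = 2.
  rewrite cardsDS ?(card_legs fan1) ?cards2 ?kl //.
  by apply/subsetP => g /set2P[] ->.
move/eqP/cards2P => [g1 [g2 [g12 E12]]].
have [g1e2 | g1e2] := eqVneq g1 e2; last by exists g1; rewrite // E12 set21.
by exists g2; rewrite ?E12 ?set22 // -g1e2 eq_sym.
Qed.

Let missing_leg1 o : o \in [set p; q] ->
  exists b, [/\ b \in E, o \in b, b != e1, b :&: e2 = set0 & trace v e1 b = [set gk; gl]].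
Proof.
move=> oPQ; have [oe1 vo dgo] : [/\ o \in e1, v != o & 4 <= d o].
  by case/set2P: oPQ => ->.
have [b [bE ob be1 be2]] := exists_leg_missing e1E e2E e21 ve1 ve2 oe1 vo dgo.
by exists b; split=> //; apply: (missing_trace1 oPQ); rewrite ?in_starD1 ?be1 ?bE ?ob.
Qed.

Let missing_leg2 o : o \in [set p'; q'] ->
  exists b, [/\ b \in E, o \in b, b != e2, b :&: e1 = set0 & trace v e2 b = [set gk; gl]].
Proof.
move=> oPQ; have [oe2 vo dgo] : [/\ o \in e2, v != o & 4 <= d o].
  by case/set2P: oPQ => ->.
have [b [bE ob be2 be1]] := exists_leg_missing e2E e1E e12 ve2 ve1 oe2 vo dgo.
by exists b; split=> //; apply: (missing_trace2 oPQ); rewrite ?in_starD1 ?be2 ?bE ?ob.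
Qed.

Section FreeLeg.
Variable ej : {set V}.
Hypotheses (ejLB : ej \in (star v :\ e1) :\: [set gk; gl]) (eje2 : ej != e2)
  (pq'_edge : exists2 z, z \in E & (p \in z) && (q' \in z)).

Let ejl : ej \in star v :\ e1. Proof. by case/setDP: ejLB. Qed.
Let ejB : ej \notin [set gk; gl]. Proof. by case/setDP: ejLB. Qed.
Let ejE : ej \in E. Proof. by case: (leg_spec fan1 ejl). Qed.
Let vej : v \in ej. Proof. by case: (leg_spec fan1 ejl). Qed.
Let ejl2 : ej \in star v :\ e2.
Proof. by move: ejl; rewrite !in_starD1 eje2 => /and3P[_ -> ->]. Qed.

Let misses e b : ej \in star v :\ e -> trace v e b = [set gk; gl] -> ej :&: b = set0.
Proof. by move=> ejl' Tb; apply: (notin_trace ejl'); rewrite Tb. Qed.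

(* [z] meets [e2], so its trace is the complement of [{gk, gl}] and contains [ej];
   [ej], [bp] and [b'] would then be pairwise disjoint legs at three vertices of [z]. *)
Lemma spokes_meet_via z o' bp b' : z \in E -> p \in z -> o' \in z -> o' \in e2 -> v != o' ->
  bp \in E -> b' \in E -> p \in bp -> o' \in b' -> ej :&: bp = set0 -> ej :&: b' = set0 ->
  bp :&: b' != set0.
Proof.
move=> zE pz o'z o'e2 vo' bpE b'E pbp o'b' ejbp ejb'.
have ze1 : z != e1 by apply: contraNneq (off_e1 o'e2 vo') => <-.
have z1 : z \in (star p :|: star q) :\ e1 by rewrite setDUl in_setU in_starD1 ze1 zE pz.
have ze2 : z :&: e2 != set0 by apply/set0Pn; exists o'; rewrite inE o'z.
have : ej \in trace v e1 z by rewrite cls1 // (negbTE ze2) in_setD ejB ejl.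
case/trace_meet/set0Pn => a /setIP[aej az]; apply/negP => /eqP bpb'.
exact: (crown_legsF zE az pz o'z ejE bpE b'E aej pbp o'b' ejbp ejb' bpb').
Qed.

(* The spokes [bq], [bp'], [bq'] miss [ej], so crowns centred at [e1], [zA] and
   [zB] force each of them to meet [bp]; by [card_crossing_le2] at most two can. *)
Lemma free_legF : False.
Proof.
have [bp [bpE pbp bpe1 bpe2 Tbp]] := missing_leg1 (set21 p q).
have [bq [bqE qbq bqe1 bqe2 Tbq]] := missing_leg1 (set22 p q).
have [bp' [bp'E p'bp' bp'e2 bp'e1 Tbp']] := missing_leg2 (set21 p' q').
have [bq' [bq'E q'bq' bq'e2 bq'e1 Tbq']] := missing_leg2 (set22 p' q').
have [zA zAE /andP[pzA p'zA]] := common_edge.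
have [zB zBE /andP[pzB q'zB]] := pq'_edge.
have bp_bp' := spokes_meet_via zAE pzA p'zA p'e2 vp' bpE bp'E pbp p'bp'
  (misses ejl Tbp) (misses ejl2 Tbp').
have bp_bq' := spokes_meet_via zBE pzB q'zB q'e2 vq' bpE bq'E pbp q'bq'
  (misses ejl Tbp) (misses ejl2 Tbq').
have bp_bq : bp :&: bq != set0.
  apply/negP => /eqP; apply: (crown_legsF e1E ve1 pe1 qe1 ejE bpE bqE vej pbp qbq).
    exact: misses ejl Tbp.
  exact: misses ejl Tbq.
have [_ _ pgk _] := leg_spec fan1 gkl; have [_ _ pgl _] := leg_spec fan1 gll.
have [[bpk bpl] [bqk bql]] := (crosses Tbp, crosses Tbq).
have [[bp'k bp'l] [bq'k bq'l]] := (crosses Tbp', crosses Tbq').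
have pbq : p \notin bq by apply: (notin_other_edge e1E bqE bqe1 qe1 pe1); rewrite // eq_sym.
have p'bq' : p' \notin bq'.
  by apply: (notin_other_edge e2E bq'E bq'e2 q'e2 p'e2); rewrite // eq_sym.
have := card_crossing_le2 bpE gkE glE pbp vgk vgl kl (setI0_notin bpe2 ve2) pgk pgl bpk bpl.
apply/negP; rewrite -ltnNge; apply: (@leq_trans #|[set bq; bp'; bq']|).
  rewrite cards3 //; last by apply: contraNneq p'bq' => <-.
    by apply: contraNneq (setI0_notin bp'e1 qe1) => <-.
  by apply: contraNneq (setI0_notin bq'e1 qe1) => <-.
apply/subset_leq_card/subsetP => b; rewrite !inE => /orP[/orP[]|] /eqP ->.
- by rewrite bqE (setI0_notin bqe2 ve2) pbq setIC bp_bq bqk bql.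
- by rewrite bp'E (setI0_notin bp'e1 ve1) (setI0_notin bp'e1 pe1) setIC bp_bp' bp'k bp'l.
- by rewrite bq'E (setI0_notin bq'e1 ve1) (setI0_notin bq'e1 pe1) setIC bp_bq' bq'k bq'l.
Qed.

End FreeLeg.

End SharedClasses.

End TwoFans.

Lemma two_fansF v p q p' q' e1 e2 : fan v p q e1 -> fan v p' q' e2 -> e1 != e2 -> False.
Proof.
move=> fan1 fan2 e12; have [e1E _ _ _ _] := fan1; have [e2E _ _ _ _] := fan2.
have [[ve1 _ _] [ve2 _ _]] := (fan_mem fan1, fan_mem fan2).
have e2l : e2 \in star v :\ e1 by rewrite in_starD1 eq_sym e12 e2E ve2.
have e1l : e1 \in star v :\ e2 by rewrite in_starD1 e12 e1E ve1.
have [B [BL cardB cls1]] := fan_classes fan1 e2l.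
have [B' [BL' cardB' cls2]] := fan_classes fan2 e1l.
have BB' := fan_classes_eq fan1 fan2 e12 BL cls1 BL' cardB' cls2; subst B'.
have /eqP/cards2P[gk [gl [kl EB]]] := cardB; subst B.
have [gkl gll] : gk \in star v :\ e1 /\ gl \in star v :\ e1 by rewrite !(subsetP BL) ?set21 ?set22.
have [ej ejLB eje2] := exists_free_leg e2 fan1 gkl gll kl.
apply: (free_legF fan1 fan2 e12 gkl gll kl cls1 cls2 ejLB eje2).
exact: (common_edge fan1 (fanC fan2) e12 gkl gll kl cls1 (classifiedC cls2)).
Qed.

Definition big_edge e := [exists y in e, 6 <= d y].
Definition near_big u := [exists f in star u, big_edge f].
Definition medium_rest e u := [forall y in e, (y != u) ==> (4 <= d y <= 5)].

Lemma medium_fan u e : d u = 5 -> e \in E -> u \in e -> medium_rest e u ->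
  exists p q, fan u p q e.
Proof.
move=> du eE ue /forall_inP m; have [p [q [Ee up uq _]]] := edge_split eE ue.
have dge y : y \in e -> u != y -> 4 <= d y.
  by move=> ye uy; move: (m y ye); rewrite eq_sym uy => /andP[].
by exists p, q; split; rewrite // dge // Ee !inE eqxx orbT.
Qed.

Lemma medium_edge_uniq u e1 e2 : d u = 5 -> e1 \in star u -> e2 \in star u ->
  medium_rest e1 u -> medium_rest e2 u -> e1 = e2.
Proof.
move=> du /setIdP[e1E ue1] /setIdP[e2E ue2] m1 m2; apply/eqP; apply: contraT => e12.
have [p [q fan1]] := medium_fan du e1E ue1 m1; have [p' [q' fan2]] := medium_fan du e2E ue2 m2.
by case: (two_fansF fan1 fan2 e12).
Qed.

Definition charge_of (k : nat) (big near medium : bool) : nat :=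
  match k with
  | 1 => 120
  | 2 => 60
  | 3 => if big then 42 else if near then 36 else 40
  | 4 => 30
  | 5 => if medium then 32 else 22
  | _ => 0
  end.

Definition charge e u := charge_of (d u) (big_edge e) (near_big u) (medium_rest e u).

Lemma charge_triple_ge (da db dc : nat) (na nb nc : bool) :
  0 < da -> 0 < db -> 0 < dc ->
  ~~ [&& 6 <= da, 2 <= db & 4 <= dc] -> ~~ [&& 6 <= da, 2 <= dc & 4 <= db] ->
  ~~ [&& 6 <= db, 2 <= da & 4 <= dc] -> ~~ [&& 6 <= db, 2 <= dc & 4 <= da] ->
  ~~ [&& 6 <= dc, 2 <= da & 4 <= db] -> ~~ [&& 6 <= dc, 2 <= db & 4 <= da] ->
  ~~ [&& da == 3, db == 5, dc == 5 & na] ->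
  ~~ [&& db == 3, da == 5, dc == 5 & nb] ->
  ~~ [&& dc == 3, da == 5, db == 5 & nc] ->
  let big := [|| 6 <= da, 6 <= db | 6 <= dc] in
  84 <= charge_of da big na ((4 <= db <= 5) && (4 <= dc <= 5))
      + charge_of db big nb ((4 <= da <= 5) && (4 <= dc <= 5))
      + charge_of dc big nc ((4 <= da <= 5) && (4 <= db <= 5)).
Proof.
case: da => [|[|[|[|[|[|da]]]]]] //; case: db => [|[|[|[|[|[|db]]]]]] //;
case: dc => [|[|[|[|[|[|dc]]]]]] //; by case: na; case: nb; case: nc.
Qed.

Lemma medium_restE e u w z : e = [set u; w; z] -> u != w -> u != z ->
  medium_rest e u = (4 <= d w <= 5) && (4 <= d z <= 5).
Proof.
move=> -> uw uz; apply/forall_inP/andP => [m | [mw mz] y].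
  by split; apply: (implyP (m _ _)); rewrite ?inE ?eqxx ?orbT // eq_sym.
by rewrite !inE => /orP[/orP[] |] /eqP ->; rewrite ?eqxx ?mw ?mz ?implybT.
Qed.

Lemma edge_charge_ge e : e \in E -> 84 <= \sum_(x in e) charge e x.
Proof.
move=> eE; have [a ae] : exists a, a \in e by apply/set0Pn; rewrite -card_gt0 (card_edge eE).
have [b [c [Ee ab ac bc]]] := edge_split eE ae.
have [be ce] : b \in e /\ c \in e by rewrite Ee !inE !eqxx !orbT.
have big3 : big_edge e = [|| 6 <= d a, 6 <= d b | 6 <= d c].
  rewrite /big_edge Ee; apply/exists_inP/or3P => [[y] | []].
    by rewrite !inE => /orP[/orP[] |] /eqP ->; [constructor 1 | constructor 2 | constructor 3].
  - by exists a; rewrite ?inE ?eqxx.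
  - by exists b; rewrite ?inE ?eqxx ?orbT.
  - by exists c; rewrite ?inE ?eqxx ?orbT.
have deg_pos x : x \in e -> 0 < d x.
  by move=> xe; rewrite degE card_gt0; apply/set0Pn; exists e; rewrite inE eE.
have no_624 h u w : h \in e -> u \in e -> w \in e -> h != u -> h != w -> u != w ->
    ~~ [&& 6 <= d h, 2 <= d u & 4 <= d w].
  by move=> he ue we hu hw uw; apply/and3P => -[]; apply: (no_edge_6_2_4 eE he ue we).
have no_355 x u w : x \in e -> u \in e -> w \in e -> u != w ->
    ~~ [&& d x == 3, d u == 5, d w == 5 & near_big x].
  move=> xe ue we uw; apply/and4P => -[/eqP dx /eqP du /eqP dw /exists_inP[f]].
  rewrite inE => /andP[fE xf] /exists_inP[h hf dh].
  exact: (near_big_deg_3_5_5F eE xe ue we uw dx du dw fE xf hf dh).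
have [ba ca cb] : [/\ b != a, c != a & c != b] by split; rewrite eq_sym.
rewrite {1}Ee sum_set3 // /charge big3 (medium_restE Ee) //.
rewrite (medium_restE (edge_set3 eE be ae ce ba bc ac)) //.
rewrite (medium_restE (edge_set3 eE ce ae be ca cb ab)) //.
apply: charge_triple_ge; rewrite ?deg_pos //.
all: first [apply: no_624 | apply: no_355]; by rewrite // eq_sym.
Qed.

Lemma vertex_charge_le u : #|[set y | 6 <= d y]| <= 2 -> d u <= 5 ->
  \sum_(e in star u) charge e u <= 120.
Proof.
move=> big2 du; rewrite /charge.
case Hd: (d u) du => [|[|[|[|[|[|k]]]]]] // _ /=; rewrite ?sum_nat_const -?degE ?Hd //.
  have [near | far] := boolP (near_big u); last first.
    rewrite (eq_bigr (fun _ => 40)) ?sum_nat_const -?degE ?Hd // => e eu.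
    by case: ifP => // be; case/exists_inP: far; exists e.
  rewrite (sum_nat_if _ _ 42 36).
  have := card_sepID (star u) big_edge; rewrite -[#|star u|]/(d u) Hd => split3.
  have : #|[set e in star u | big_edge e]| <= 2.
    have uH : u \notin [set y | 6 <= d y] by rewrite inE Hd.
    apply: leq_trans big2; apply: leq_trans (card_star_meet uH).
    apply/subset_leq_card/subsetP => e; rewrite !inE => /andP[eu /exists_inP[y ye dy]].
    by rewrite eu; apply/set0Pn; exists y; rewrite !inE ye.
  set k1 := #|[set e in star u | big_edge e]| in split3 *.
  set k2 := #|[set e in star u | ~~ big_edge e]| in split3 *.
  by clear -split3; lia.
rewrite sum_nat_if.
have := card_sepID (star u) (medium_rest^~ u); rewrite -[#|star u|]/(d u) Hd => split5.
have : #|[set e in star u | medium_rest e u]| <= 1.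
  apply/card_le1_eqP => e1 e2 /setIdP[e1u m1] /setIdP[e2u m2].
  exact: (medium_edge_uniq Hd).
set k1 := #|[set e in star u | medium_rest e u]| in split5 *.
set k2 := #|[set e in star u | ~~ medium_rest e u]| in split5 *.
by clear -split5; lia.
Qed.

Lemma sum_incidences (F : {set V} -> V -> nat) :
  \sum_(e in E) \sum_(x in e) F e x = \sum_x \sum_(e in star x) F e x.
Proof.
rewrite (exchange_big_dep predT) //=; apply: eq_bigr => x _.
by apply: eq_bigl => e; rewrite inE.
Qed.

Lemma charge_total_bound : #|[set y | 6 <= d y]| <= 2 ->
  84 * #|E| <= 120 * #|[set y | ~~ (6 <= d y)]|.
Proof.
move=> big2; apply: (@leq_trans (\sum_(e in E) \sum_(x in e) charge e x)).
  by rewrite mulnC -sum_nat_const; apply: leq_sum => e; apply: edge_charge_ge.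
rewrite sum_incidences (bigID (fun x => 6 <= d x)) /= big1 ?add0n; last first.
  by move=> x big_x; apply: big1 => e _; rewrite /charge; case: (d x) big_x => [|[|[|[|[|[|k]]]]]].
rewrite (eq_bigl (fun x => x \in [set y | ~~ (6 <= d y)])) => [|x]; last by rewrite inE.
rewrite mulnC -sum_nat_const; apply: leq_sum => x; rewrite inE -ltnNge ltnS.
exact: vertex_charge_le.
Qed.

End LinearGraph.

Theorem theorem1p2 (V : finType) (E : {set {set V}}) :
  linear_3graph E -> crown_free E ->
  #|[set v : V | 6 <= deg E v]| <= 2 ->
  7 * #|E| <= 10 * (#|V| - #|[set v : V | 6 <= deg E v]|).
Proof.
move=> E_linear E_crown_free big2.
have := charge_total_bound E_linear E_crown_free big2.
have -> : [set y | ~~ (6 <= deg E y)] = ~: [set v | 6 <= deg E v].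
  by apply/setP => y; rewrite !inE.
rewrite -[#|V|](cardsC [set v | 6 <= deg E v]) addKn.
by move: #|E| #|~: _| => m n; lia.
Qed.
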